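(* For $t>0$ let $$P(t)=\frac{e^{2 t} (t^3-12 t^2+54 t-86)-e^t (t^3-12 t^2+16 t-160)-26 t-74}{e^t-1},\qquad Q(t)=2e^{2t}-e^t (t^2-6 t+18)+8(t+2).$$ Then $Q(t)>0$ for all $t>0$, the function $P(t)/Q(t)$ is strictly decreasing on $(0,\infty)$, and $$\lim_{t\to0^+}\frac{P(t)}{Q(t)}=1,\qquad \lim_{t\to\infty}\frac{P(t)}{Q(t)}=0.$$ *)

From Stdlib Require Import Reals.
Open Scope R_scope.

Definition P (t : R) : R :=
  (exp (2 * t) * (t ^ 3 - 12 * t ^ 2 + 54 * t - 86)
   - exp t * (t ^ 3 - 12 * t ^ 2 + 16 * t - 160) - 26 * t - 74) / (exp t - 1).

Definition Q (t : R) : R :=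
  2 * exp (2 * t) - exp t * (t ^ 2 - 6 * t + 18) + 8 * (t + 2).

Definition ratioPQ (t : R) : R := P t / Q t.

Definition limit_pinfty (f : R -> R) (l : R) : Prop :=
  forall eps : R, 0 < eps -> exists M : R, forall t : R, M < t -> Rabs (f t - l) < eps.

(* Put N(t) = numerator of P and D(t) = (e^t - 1) Q(t), so that P/Q = N/D.
   Both N and D are exponential polynomials  sum_k p_k(t) e^(k t)  with integer
   polynomial coefficients p_k, and so is every quantity the theorem needs:
   Q, the Wronskian N D' - N' D, D - t^4, t^5 e^(4t) -+ (N - D), N and 2D - tN.
   Each of these is shown to be positive on (0, oo) by a certificate checked by
   computation: if E(0) >= 0 and E' > 0 on (0, oo) then E > 0 there (mean value
   theorem); if E = e^t E1 it suffices that E1 > 0; and an exponential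
   polynomial with no exponential part is positive when its coefficients are
   nonnegative and not all zero. *)

From Stdlib Require Import Reals Lra ZArith List Bool.
Import ListNotations.
Open Scope R_scope.

(* Integer polynomials, stored by increasing degree: [c0; c1; ...]. *)
Definition zpoly := list Z.

Fixpoint zp_eval (p : zpoly) (t : R) : R :=
  match p with nil => 0 | c :: q => IZR c + t * zp_eval q t end.

Fixpoint zp_add (p q : zpoly) : zpoly :=
  match p, q with
  | nil, _ => q
  | _, nil => p
  | a :: p', b :: q' => (a + b)%Z :: zp_add p' q'
  end.

Definition zp_scale (c : Z) (p : zpoly) : zpoly := map (Z.mul c) p.

Fixpoint zp_mul (p q : zpoly) : zpoly :=
  match p with nil => nil | c :: p' => zp_add (zp_scale c q) (0%Z :: zp_mul p' q) end.

(* Derivative of c + t q(t), namely q + t q'. *)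
Fixpoint zp_deriv (p : zpoly) : zpoly :=
  match p with nil => nil | _ :: q => zp_add q (0%Z :: zp_deriv q) end.

Lemma zp_eval_add p q t : zp_eval (zp_add p q) t = zp_eval p t + zp_eval q t.
Proof.
  revert q; induction p as [|a p IH]; intros [|b q]; simpl; try ring.
  rewrite IH, plus_IZR; ring.
Qed.

Lemma zp_eval_scale c p t : zp_eval (zp_scale c p) t = IZR c * zp_eval p t.
Proof. induction p as [|a p IH]; simpl; [ring|]. rewrite IH, mult_IZR; ring. Qed.

Lemma zp_eval_mul p q t : zp_eval (zp_mul p q) t = zp_eval p t * zp_eval q t.
Proof.
  induction p as [|a p IH]; simpl; [ring|].
  rewrite zp_eval_add, zp_eval_scale; simpl; rewrite IH; ring.
Qed.

Lemma derivable_pt_lim_eq (f : R -> R) x l l' :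
  derivable_pt_lim f x l -> l = l' -> derivable_pt_lim f x l'.
Proof. intros H ->; exact H. Qed.

Lemma zp_eval_deriv p t : derivable_pt_lim (zp_eval p) t (zp_eval (zp_deriv p) t).
Proof.
  induction p as [|c q IH]; simpl.
  - apply derivable_pt_lim_const.
  - rewrite zp_eval_add; simpl.
    eapply derivable_pt_lim_eq.
    + apply (derivable_pt_lim_plus (fun _ => IZR c) (fun y => y * zp_eval q y)).
      * apply derivable_pt_lim_const.
      * apply (derivable_pt_lim_mult (fun y => y) (zp_eval q));
          [apply derivable_pt_lim_id | exact IH].
    + ring.
Qed.

(* Exponential polynomials [p0; p1; ...], denoting sum_k p_k(t) e^(k t),
   evaluated by Horner's scheme in e^t. *)
Definition expoly := list zpoly.

Fixpoint ep_eval (E : expoly) (t : R) : R :=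
  match E with nil => 0 | p :: E' => zp_eval p t + exp t * ep_eval E' t end.

Fixpoint ep_add (A B : expoly) : expoly :=
  match A, B with
  | nil, _ => B
  | _, nil => A
  | p :: A', q :: B' => zp_add p q :: ep_add A' B'
  end.

Definition ep_opp (A : expoly) : expoly := map (zp_scale (-1)) A.

Definition ep_sub (A B : expoly) : expoly := ep_add A (ep_opp B).

Fixpoint ep_mul (A B : expoly) : expoly :=
  match A with nil => nil | p :: A' => ep_add (map (zp_mul p) B) (nil :: ep_mul A' B) end.

(* Derivative of p + e^t E', namely p' + e^t (E' + E''). *)
Fixpoint ep_deriv (E : expoly) : expoly :=
  match E with nil => nil | p :: E' => zp_deriv p :: ep_add E' (ep_deriv E') end.

Definition ep_mono (k n : nat) : expoly := repeat nil k ++ [repeat 0%Z n ++ [1%Z]].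

Definition ep_at0 (E : expoly) : Z := fold_right (fun p acc => (hd 0 p + acc)%Z) 0%Z E.

Lemma ep_eval_add A B t : ep_eval (ep_add A B) t = ep_eval A t + ep_eval B t.
Proof.
  revert B; induction A as [|p A IH]; intros [|q B]; simpl; try ring.
  rewrite IH, zp_eval_add; ring.
Qed.

Lemma ep_eval_sub A B t : ep_eval (ep_sub A B) t = ep_eval A t - ep_eval B t.
Proof.
  unfold ep_sub; rewrite ep_eval_add.
  enough (ep_eval (ep_opp B) t = - ep_eval B t) by lra.
  induction B as [|p B IH]; simpl; [ring|]. rewrite IH, zp_eval_scale; simpl; ring.
Qed.

Lemma ep_eval_map_mul p B t : ep_eval (map (zp_mul p) B) t = zp_eval p t * ep_eval B t.
Proof. induction B as [|q B IH]; simpl; [ring|]. rewrite IH, zp_eval_mul; ring. Qed.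

Lemma ep_eval_mul A B t : ep_eval (ep_mul A B) t = ep_eval A t * ep_eval B t.
Proof.
  induction A as [|p A IH]; simpl; [ring|].
  rewrite ep_eval_add, ep_eval_map_mul; simpl; rewrite IH; ring.
Qed.

Lemma ep_eval_mono k n t : ep_eval (ep_mono k n) t = t ^ n * exp t ^ k.
Proof.
  unfold ep_mono; induction k as [|k IH]; simpl.
  - enough (zp_eval (repeat 0%Z n ++ [1%Z]) t = t ^ n) by lra.
    induction n as [|n IHn]; simpl; [ring|]. rewrite IHn; ring.
  - rewrite IH; ring.
Qed.

Lemma ep_eval_deriv E t : derivable_pt_lim (ep_eval E) t (ep_eval (ep_deriv E) t).
Proof.
  induction E as [|p E IH]; simpl.
  - apply derivable_pt_lim_const.
  - rewrite ep_eval_add.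
    eapply derivable_pt_lim_eq.
    + apply (derivable_pt_lim_plus (zp_eval p) (fun y => exp y * ep_eval E y));
        [apply zp_eval_deriv|].
      apply (derivable_pt_lim_mult exp (ep_eval E));
        [apply derivable_pt_lim_exp | exact IH].
    + ring.
Qed.

Lemma ep_eval_0 E : ep_eval E 0 = IZR (ep_at0 E).
Proof.
  induction E as [|p E IH]; simpl; [reflexivity|].
  rewrite IH, exp_0, plus_IZR. destruct p; simpl; ring.
Qed.

Lemma pos_of_deriv_pos (g g' : R -> R) :
  (forall t, derivable_pt_lim g t (g' t)) -> 0 <= g 0 ->
  (forall t, 0 < t -> 0 < g' t) -> forall t, 0 < t -> 0 < g t.
Proof.
  intros Hd H0 Hpos t Ht.
  destruct (MVT_cor2 g g' 0 t Ht (fun c _ => Hd c)) as [c [Hc Hc']].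
  assert (0 < g' c) by (apply Hpos; lra).
  assert (0 < g' c * (t - 0)) by (apply Rmult_lt_0_compat; lra). lra.
Qed.

Definition zp_is_zero (p : zpoly) : bool := forallb (fun c => Z.eqb c 0) p.
Definition ep_is_zero (E : expoly) : bool := forallb zp_is_zero E.
Definition zp_is_pos (p : zpoly) : bool := forallb (Z.leb 0) p && existsb (Z.ltb 0) p.

Lemma zp_is_zero_sound p t : zp_is_zero p = true -> zp_eval p t = 0.
Proof.
  induction p as [|c p IH]; simpl; [reflexivity|].
  intros H; apply andb_prop in H as [Hc Hp]. apply Z.eqb_eq in Hc; subst.
  rewrite IH by exact Hp; ring.
Qed.

Lemma ep_is_zero_sound E t : ep_is_zero E = true -> ep_eval E t = 0.
Proof.
  induction E as [|p E IH]; simpl; [reflexivity|].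
  intros H; apply andb_prop in H as [Hp HE].
  rewrite IH, zp_is_zero_sound by assumption; ring.
Qed.

Lemma zp_nonneg_sound p t : forallb (Z.leb 0) p = true -> 0 <= t -> 0 <= zp_eval p t.
Proof.
  induction p as [|c p IH]; simpl; [lra|].
  intros H Ht; apply andb_prop in H as [Hc Hp].
  apply Zle_bool_imp_le, IZR_le in Hc. specialize (IH Hp Ht). nra.
Qed.

Lemma zp_is_pos_sound p t : zp_is_pos p = true -> 0 < t -> 0 < zp_eval p t.
Proof.
  unfold zp_is_pos; induction p as [|c p IH]; simpl; [discriminate|].
  intros H Ht. apply andb_prop in H as [Hnn Hex]. apply andb_prop in Hnn as [Hc Hp].
  apply Zle_bool_imp_le, IZR_le in Hc.
  apply orb_prop in Hex as [Hc'|Hex].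
  - apply Z.ltb_lt, IZR_lt in Hc'.
    pose proof (zp_nonneg_sound p t Hp (Rlt_le _ _ Ht)). nra.
  - assert (0 < zp_eval p t) by (apply IH; [rewrite Hp, Hex|]; auto). nra.
Qed.

Fixpoint pos_cert (fuel : nat) (E : expoly) : bool :=
  match fuel, E with
  | O, _ | _, nil => false
  | S f, p :: E' =>
      if ep_is_zero E' then zp_is_pos p
      else if zp_is_zero p then pos_cert f E'
      else Z.leb 0 (ep_at0 E) && pos_cert f (ep_deriv E)
  end.

Lemma pos_cert_sound fuel E : pos_cert fuel E = true -> forall t, 0 < t -> 0 < ep_eval E t.
Proof.
  revert E; induction fuel as [|f IH]; intros [|p E']; cbn [pos_cert]; try discriminate.
  destruct (ep_is_zero E') eqn:HE'; [|destruct (zp_is_zero p) eqn:Hp].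
  - intros H t Ht; simpl. rewrite (ep_is_zero_sound E' t HE').
    pose proof (zp_is_pos_sound p t H Ht). lra.
  - intros H t Ht; simpl. rewrite (zp_is_zero_sound p t Hp).
    pose proof (IH E' H t Ht). pose proof (exp_pos t). nra.
  - intros H. apply andb_prop in H as [H0 Hd]. apply Zle_bool_imp_le, IZR_le in H0.
    apply (pos_of_deriv_pos _ (ep_eval (ep_deriv (p :: E')))).
    + intros; apply ep_eval_deriv.
    + rewrite ep_eval_0; exact H0.
    + apply IH; exact Hd.
Qed.

(* Variant that first differentiates n times unconditionally (checking the
   value at 0 each time) before running [pos_cert]; some functions are only
   certified this way, because [pos_cert] factors out e^t as soon as the
   polynomial part vanishes, which is not always the successful move. *)
Fixpoint pos_cert_after (n : nat) (E : expoly) : bool :=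
  match n with
  | O => pos_cert 100 E
  | S m => Z.leb 0 (ep_at0 E) && pos_cert_after m (ep_deriv E)
  end.

Lemma pos_cert_after_sound n E :
  pos_cert_after n E = true -> forall t, 0 < t -> 0 < ep_eval E t.
Proof.
  revert E; induction n as [|m IH]; intros E; cbn [pos_cert_after].
  - apply pos_cert_sound.
  - intros H. apply andb_prop in H as [H0 Hd]. apply Zle_bool_imp_le, IZR_le in H0.
    apply (pos_of_deriv_pos _ (ep_eval (ep_deriv E))).
    + intros; apply ep_eval_deriv.
    + rewrite ep_eval_0; exact H0.
    + apply IH; exact Hd.
Qed.

Lemma Rabs_div_lt (a d e : R) : 0 < d -> Rabs a < e * d -> Rabs (a / d) < e.
Proof.
  intros Hd H. unfold Rdiv; rewrite Rabs_mult, Rabs_inv, (Rabs_pos_eq d) by lra.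
  apply (Rmult_lt_reg_r d); [exact Hd|].
  rewrite Rmult_assoc, Rinv_l by lra. lra.
Qed.

Lemma quotient_strictly_decreasing (N D N' D' : R -> R) :
  (forall t, derivable_pt_lim N t (N' t)) ->
  (forall t, derivable_pt_lim D t (D' t)) ->
  (forall t, 0 < t -> 0 < D t) ->
  (forall t, 0 < t -> 0 < N t * D' t - N' t * D t) ->
  forall s t, 0 < s -> s < t -> N t / D t < N s / D s.
Proof.
  intros HN HD Dpos Wpos s t Hs Hst.
  set (g' := fun x => (N' x * D x - D' x * N x) / (D x) ^ 2).
  assert (Hd : forall c, s <= c <= t -> derivable_pt_lim (fun x => N x / D x) c (g' c)).
  { intros c Hc. eapply derivable_pt_lim_eq.
    - apply (derivable_pt_lim_div N D c _ _ (HN c) (HD c)).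
      pose proof (Dpos c ltac:(lra)); lra.
    - unfold g', Rsqr; f_equal; ring. }
  destruct (MVT_cor2 _ g' s t Hst Hd) as [c [Hc Hc']].
  assert (g' c < 0).
  { apply Rdiv_neg_pos.
    - pose proof (Wpos c ltac:(lra)); lra.
    - apply pow_lt, Dpos; lra. }
  assert (g' c * (t - s) < 0) by nra. lra.
Qed.

Lemma limit_at_0_of_linear_bound (f : R -> R) (l C : R) :
  0 < C -> (forall t, 0 < t < 1 -> Rabs (f t - l) < C * t) ->
  limit1_in f (fun t => 0 < t) l 0.
Proof.
  intros HC Hf eps Heps. exists (Rmin 1 (eps / C)). split.
  { apply Rmin_glb_lt; [lra | apply Rdiv_lt_0_compat; lra]. }
  intros t [Ht Hdist]. simpl in *; unfold R_dist in *.
  rewrite Rminus_0_r, Rabs_pos_eq in Hdist by lra.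
  assert (t < 1) by (eapply Rlt_le_trans; [exact Hdist | apply Rmin_l]).
  assert (Hte : t < eps / C) by (eapply Rlt_le_trans; [exact Hdist | apply Rmin_r]).
  assert (C * t < eps).
  { apply (Rmult_lt_compat_l C) in Hte; [|exact HC].
    unfold Rdiv in Hte; rewrite <- Rmult_assoc, (Rmult_comm C eps), Rmult_assoc,
      Rinv_r, Rmult_1_r in Hte by lra. exact Hte. }
  pose proof (Hf t ltac:(lra)). lra.
Qed.

Lemma limit_pinfty_of_inverse_bound (f : R -> R) (c : R) :
  0 < c -> (forall t, 0 < t -> 0 < f t /\ t * f t < c) -> limit_pinfty f 0.
Proof.
  intros Hc Hf eps Heps. exists (c / eps). intros t Ht.
  assert (Hce : c < eps * t).
  { apply (Rmult_lt_compat_l eps) in Ht; [|exact Heps].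
    unfold Rdiv in Ht; rewrite (Rmult_comm c), <- Rmult_assoc, Rinv_r,
      Rmult_1_l in Ht by lra. exact Ht. }
  assert (Ht0 : 0 < t) by (assert (0 < c / eps) by (apply Rdiv_lt_0_compat; lra); lra).
  destruct (Hf t Ht0) as [Hpos Hbound].
  rewrite Rminus_0_r, Rabs_pos_eq by lra. nra.
Qed.

Definition num_ep : expoly := [[-74;-26]; [160;-16;12;-1]; [-86;54;-12;1]]%Z.
Definition Q_ep : expoly := [[16;8]; [-18;6;-1]; [2]]%Z.
Definition den_ep : expoly := ep_mul [[-1];[1]]%Z Q_ep.
Definition wronskian_ep : expoly :=
  ep_sub (ep_mul num_ep (ep_deriv den_ep)) (ep_mul (ep_deriv num_ep) den_ep).

Definition numP (t : R) : R :=
  exp (2 * t) * (t ^ 3 - 12 * t ^ 2 + 54 * t - 86)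
  - exp t * (t ^ 3 - 12 * t ^ 2 + 16 * t - 160) - 26 * t - 74.

Lemma exp_double t : exp (2 * t) = exp t * exp t.
Proof. replace (2 * t) with (t + t) by ring. apply exp_plus. Qed.

Lemma num_ep_eval t : ep_eval num_ep t = numP t.
Proof. unfold numP; rewrite exp_double; simpl; ring. Qed.

Lemma Q_ep_eval t : ep_eval Q_ep t = Q t.
Proof. unfold Q; rewrite exp_double; simpl; ring. Qed.

Lemma den_ep_eval t : ep_eval den_ep t = (exp t - 1) * Q t.
Proof. unfold den_ep; rewrite ep_eval_mul, Q_ep_eval; simpl; ring. Qed.

Lemma Q_cert : pos_cert_after 0 Q_ep = true.
Proof. vm_compute; reflexivity. Qed.
Lemma den_cert : pos_cert_after 0 (ep_sub den_ep (ep_mono 0 4)) = true.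
Proof. vm_compute; reflexivity. Qed.
Lemma wronskian_cert : pos_cert_after 8 wronskian_ep = true.
Proof. vm_compute; reflexivity. Qed.
Lemma num_cert : pos_cert_after 4 num_ep = true.
Proof. vm_compute; reflexivity. Qed.
Lemma near0_upper_cert : pos_cert_after 0 (ep_add (ep_mono 4 5) (ep_sub num_ep den_ep)) = true.
Proof. vm_compute; reflexivity. Qed.
Lemma near0_lower_cert : pos_cert_after 0 (ep_sub (ep_mono 4 5) (ep_sub num_ep den_ep)) = true.
Proof. vm_compute; reflexivity. Qed.
Lemma decay_cert : pos_cert_after 0 (ep_sub (ep_mul [[2]]%Z den_ep) (ep_mul [[0;1]]%Z num_ep)) = true.
Proof. vm_compute; reflexivity. Qed.

Lemma Q_pos t : 0 < t -> 0 < Q t.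
Proof. intros Ht; rewrite <- Q_ep_eval; exact (pos_cert_after_sound _ _ Q_cert t Ht). Qed.

Lemma den_gt_t4 t : 0 < t -> t ^ 4 < ep_eval den_ep t.
Proof.
  intros Ht; pose proof (pos_cert_after_sound _ _ den_cert t Ht) as H.
  rewrite ep_eval_sub, ep_eval_mono, pow_O, Rmult_1_r in H; lra.
Qed.

Lemma den_pos t : 0 < t -> 0 < ep_eval den_ep t.
Proof. intros Ht; pose proof (den_gt_t4 t Ht); pose proof (pow_lt t 4 Ht); lra. Qed.

Lemma num_den_close t : 0 < t -> Rabs (ep_eval num_ep t - ep_eval den_ep t) < t ^ 5 * exp t ^ 4.
Proof.
  intros Ht.
  pose proof (pos_cert_after_sound _ _ near0_upper_cert t Ht) as Hu.
  pose proof (pos_cert_after_sound _ _ near0_lower_cert t Ht) as Hl.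
  rewrite ep_eval_add, ep_eval_sub, ep_eval_mono in Hu.
  rewrite !ep_eval_sub, ep_eval_mono in Hl.
  apply Rabs_def1; lra.
Qed.

Lemma wronskian_pos t : 0 < t ->
  0 < ep_eval num_ep t * ep_eval (ep_deriv den_ep) t
      - ep_eval (ep_deriv num_ep) t * ep_eval den_ep t.
Proof.
  intros Ht; pose proof (pos_cert_after_sound _ _ wronskian_cert t Ht) as HW.
  unfold wronskian_ep in HW; rewrite ep_eval_sub, !ep_eval_mul in HW; exact HW.
Qed.

(* At infinity: 0 < N/D and t N/D < 2, from N > 0 and t N < 2 D. *)
Lemma ratio_decay t : 0 < t ->
  0 < ep_eval num_ep t / ep_eval den_ep t
  /\ t * (ep_eval num_ep t / ep_eval den_ep t) < 2.
Proof.
  intros Ht. pose proof (den_pos t Ht) as HD.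
  pose proof (pos_cert_after_sound _ _ num_cert t Ht) as HN.
  pose proof (pos_cert_after_sound _ _ decay_cert t Ht) as HtN.
  rewrite ep_eval_sub, !ep_eval_mul in HtN; cbn [ep_eval zp_eval] in HtN.
  split; [apply Rdiv_lt_0_compat; lra|].
  unfold Rdiv; rewrite <- Rmult_assoc. apply (Rmult_lt_reg_r (ep_eval den_ep t)); [lra|].
  rewrite Rmult_assoc, Rinv_l, Rmult_1_r by lra. lra.
Qed.

Lemma ratioPQ_eq t : 0 < t -> ratioPQ t = ep_eval num_ep t / ep_eval den_ep t.
Proof.
  intros Ht. unfold ratioPQ, P. rewrite den_ep_eval, num_ep_eval. fold (numP t).
  assert (0 < Q t) by (apply Q_pos; exact Ht).
  assert (1 < exp t) by (rewrite <- exp_0; apply exp_increasing; exact Ht).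
  field; split; lra.
Qed.

Lemma exp_pow4_lt_81 t : t < 1 -> exp t ^ 4 < 81.
Proof.
  intros Ht. assert (He : exp t < 3).
  { apply Rlt_le_trans with (exp 1); [apply exp_increasing; exact Ht | apply exp_le_3]. }
  pose proof (exp_pos t).
  assert (exp t ^ 2 < 9) by nra. replace (exp t ^ 4) with (exp t ^ 2 * exp t ^ 2) by ring.
  pose proof (pow_lt (exp t) 2 (exp_pos t)). nra.
Qed.

(* Near 0: |N/D - 1| = |N - D| / D < t^5 e^(4t) / t^4 < 81 t. *)
Lemma ratio_close_to_one t : 0 < t < 1 ->
  Rabs (ep_eval num_ep t / ep_eval den_ep t - 1) < 81 * t.
Proof.
  intros [Ht Ht1].
  pose proof (den_gt_t4 t Ht) as HD. pose proof (num_den_close t Ht) as Hclose.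
  pose proof (exp_pow4_lt_81 t Ht1). pose proof (pow_lt t 4 Ht).
  replace (ep_eval num_ep t / ep_eval den_ep t - 1)
    with ((ep_eval num_ep t - ep_eval den_ep t) / ep_eval den_ep t) by (field; lra).
  apply Rabs_div_lt; [lra|].
  assert (t ^ 5 * exp t ^ 4 <= t ^ 5 * 81)
    by (apply Rmult_le_compat_l; [apply pow_le|]; lra).
  replace (t ^ 5 * 81) with (81 * t * t ^ 4) in * by ring.
  assert (81 * t * t ^ 4 < 81 * t * ep_eval den_ep t) by (apply Rmult_lt_compat_l; lra).
  lra.
Qed.

Theorem mainTheorem6 :
  (forall t : R, 0 < t -> 0 < Q t) /\
  (forall s t : R, 0 < s -> s < t -> ratioPQ t < ratioPQ s) /\
  limit1_in ratioPQ (fun t => 0 < t) 1 0 /\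
  limit_pinfty ratioPQ 0.
Proof.
  split; [exact Q_pos|]. split; [|split].
  -
    intros s t Hs Hst. rewrite !ratioPQ_eq by lra.
    apply (quotient_strictly_decreasing _ _ _ _ (ep_eval_deriv num_ep)
             (ep_eval_deriv den_ep) den_pos wronskian_pos s t Hs Hst).
  -
    apply (limit_at_0_of_linear_bound _ _ 81); [lra|].
    intros t Ht. rewrite ratioPQ_eq by lra. exact (ratio_close_to_one t Ht).
  -
    apply (limit_pinfty_of_inverse_bound _ 2); [lra|].
    intros t Ht. rewrite ratioPQ_eq by exact Ht. exact (ratio_decay t Ht).
Qed.
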